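(* Let $G$ be a finite affine primitive permutation group with point stabilizer $H$ and minimal normal subgroup $V\cong C_p^n$, written additively as an $\mathbb F_p$-vector space. Let $h\in H$ and $v\in V$, set $w:=v^{h^{-1}}-v$ and $k:=\lceil\log_2 p\rceil$. Then the cyclic subgroup $\langle w\rangle$ is contained in a setwise product of $k+1$ conjugates of $H$.
   Context: A finite primitive permutation group $G$ is affine if it has an abelian minimal normal subgroup; this is then the unique minimal normal subgroup $V\cong C_p^n$ ($p$ prime), $G=VH$ where $H$ is a point stabilizer, and $H$ acts on $V$ by conjugation $v^{h}=h^{-1}vh$, irreducibly, as a group of linear transformations. *)

From mathcomp Require Import all_boot all_order all_fingroup all_solvable.
Set Implicit Arguments.
Unset Strict Implicit.
Unset Printing Implicit Defensive.

From mathcomp Require Import all_boot all_order all_fingroup all_solvable.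
Set Implicit Arguments. Unset Strict Implicit. Unset Printing Implicit Defensive.
Local Open Scope group_scope.

(* Write V additively and let D := h^-1 - 1 act on V, so w = D v.  D is additive
   on V, so <w> = {D (m v) | 0 <= m < p} and p <= 2^k.  Expand m = \sum_(i < k)
   b_i 2^i in binary and set s_i := 2^i v.  Because V is abelian and normalised
   by h, D (b_i s_i) = (h^b_i)^(-s_i) (h^-b_i)^(-2 s_i), and -2 s_i = -s_(i+1).
   Regrouping this telescoping product, D (m v) is the product over i <= k of the
   elements (h^-b_(i-1) h^b_i)^(-s_i) of H^(-s_i), where b_(-1) = b_k = 0. *)

Lemma modn_exp2S m k : m %% 2 ^ k.+1 = m %% 2 ^ k + odd (m %/ 2 ^ k) * 2 ^ k.
Proof.
rewrite -modn2 modn_divl -expnS addnC {1}(divn_eq (m %% 2 ^ k.+1) (2 ^ k)).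
by rewrite modn_dvdm // dvdn_exp2l.
Qed.

Lemma minnormal_abelian_abelem (gT : finGroupType) (G V : {group gT}) (p : nat) :
  minnormal V G -> abelian V -> p.-group V -> p.-abelem V.
Proof.
move=> minV abV pV.
have [_ ntV /is_abelemP[q _ abqV]] := minnormal_solvable minV (subxx V) (abelian_sol abV).
have [q_pr q_dvd _] := pgroup_pdiv (abelem_pgroup abqV) ntV.
have : q \in (p : nat_pred) by apply: pnatPpi pV _; rewrite mem_primes q_pr cardG_gt0.
by rewrite inE => /eqP <-.
Qed.

Definition dconj (gT : finGroupType) (g x : gT) := x ^ g * x^-1.

Lemma dconj1 (gT : finGroupType) (g : gT) : dconj g 1 = 1.
Proof. by rewrite /dconj conj1g invg1 mulg1. Qed.

Lemma dconj_telescope (gT : finGroupType) (b s : gT) :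
  commute s (s ^ b^-1) -> b ^ s^-1 * b^-1 ^ (s * s)^-1 = dconj b^-1 s.
Proof.
move=> csJs; have -> : b ^ s^-1 * b^-1 ^ (s * s)^-1 = s * s ^ b^-1 * s^-1 * s^-1.
  by rewrite !conjgE !invgK invMg !mulgA mulgKV.
by rewrite csJs mulgK.
Qed.

Section AdditiveDconj.

Variables (gT : finGroupType) (V : {group gT}) (g : gT).
Hypotheses (nVg : g \in 'N(V)) (abV : abelian V).

Lemma dconj_mem x : x \in V -> dconj g x \in V.
Proof. by move=> Vx; rewrite groupM ?groupV ?memJ_norm. Qed.

Lemma dconjM x y : x \in V -> y \in V -> dconj g (x * y) = dconj g x * dconj g y.
Proof.
move=> Vx Vy; have cVx : commute (y ^ g * y^-1) x^-1.
  by apply: (centsP abV); [exact: dconj_mem | exact: groupVr].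
by rewrite /dconj conjMg invMg mulgA -(mulgA (x ^ g)) -mulgA cVx mulgA.
Qed.

Lemma dconjX x n : x \in V -> dconj g (x ^+ n) = dconj g x ^+ n.
Proof.
move=> Vx; elim: n => [|n IHn]; first by rewrite dconj1.
by rewrite !expgS dconjM ?groupX // IHn.
Qed.

End AdditiveDconj.

Lemma dconj_expg_bool (gT : finGroupType) (x s : gT) (b : bool) :
  dconj (x ^+ b) s = dconj x (s ^+ b).
Proof. by case: b; rewrite ?expg1 // expg0 dconj1 /dconj conjg1 mulgV. Qed.

Section BinaryExpansion.

Variables (gT : finGroupType) (V H : {group gT}) (h u : gT) (m : nat).
Hypotheses (nVh : h \in 'N(V)) (abV : abelian V) (Hh : h \in H) (Vu : u \in V).

Let digit i := h ^+ odd (m %/ 2 ^ i).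
Let shift i := (u ^+ (2 ^ i))^-1.
Let factor i := ((if i is j.+1 then digit j else 1)^-1 * digit i) ^ shift i.

Let nVdigit i : digit i \in 'N(V). Proof. exact: groupX. Qed.

Lemma prod_factor k :
  \prod_(i < k.+1) factor i = dconj h^-1 (u ^+ (m %% 2 ^ k)) * digit k ^ shift k.
Proof.
elim: k => [|k IHk].
  by rewrite big_ord1 /factor expn0 modn1 dconj1 invg1 !mul1g.
rewrite big_ord_recr /= IHk /factor conjMg.
set s := u ^+ (2 ^ k).
have Vs : s \in V by rewrite groupX.
have -> : shift k = s^-1 by [].
have -> : shift k.+1 = (s * s)^-1.
  by rewrite /shift expnS mulnC expgM expgS expg1.
rewrite mulgA -(mulgA _ (digit k ^ _)) dconj_telescope; last first.
  by apply: (centsP abV); rewrite // memJ_norm ?groupV.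
rewrite -expgVn dconj_expg_bool -(dconjM (groupVr nVh)) ?groupX //.
by rewrite -expgM mulnC -expgD -modn_exp2S.
Qed.

Lemma dconjX_mem_prod_conjg n :
  m < 2 ^ n -> dconj h^-1 (u ^+ m) \in \prod_(i < n.+1) H :^ (u ^+ (2 ^ i))^-1.
Proof.
move=> lt_m_2n; have := prod_factor n.
rewrite modn_small // /digit divn_small // expg0 conj1g mulg1 => <-.
by apply: mem_prodg => -[[|j] ?] _; rewrite /factor memJ_conjg groupM ?groupV ?groupX.
Qed.

End BinaryExpansion.

Theorem lemma17 (T : finType) (G V : {group {perm T}}) (a : T) (p : nat)
  (h v : {perm T}) :
  [primitive G, on [set: T] | 'P] ->
  V <| G -> minnormal V G -> abelian V ->
  prime p -> p.-group V ->
  h \in 'C_G[a | 'P] -> v \in V ->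
  exists x : 'I_(up_log 2 p).+1 -> {perm T},
    (forall i, x i \in G) /\
    <[(v ^ h^-1) * v^-1]> \subset \prod_(i < (up_log 2 p).+1) ('C_G[a | 'P] :^ x i).
Proof.
move=> _ /andP[sVG nVG] minV abV p_pr pV Hh Vv.
have /setIP[Gh _] := Hh.
have nVh : h \in 'N(V) := subsetP nVG h Gh.
have /(abelemP p_pr)[_ expVp] := minnormal_abelian_abelem minV abV pV.
exists (fun i => (v ^+ (2 ^ i))^-1); split.
  by move=> i; rewrite groupV groupX // (subsetP sVG).
apply/subsetP => _ /cycleP[i ->].
rewrite -[_ * _]/(dconj h^-1 v) -(dconjX (groupVr nVh)) // -(expg_mod _ (expVp v Vv)).
apply: (dconjX_mem_prod_conjg nVh abV Hh Vv).
exact: leq_trans (ltn_pmod _ (prime_gt0 p_pr)) (up_logP p _).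
Qed.
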